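(* For every integer $m\ge 2$ and every graph $G$, $\hom(S_0;G)\cdot\hom(S_{2,1^{m-2}};G)\ge \hom(S_{2,1^{m-1}};G)$.
   Context: All graphs are finite; $\hom(H;G)$ is the number of graph homomorphisms from $H$ to $G$ (maps $V(H)\to V(G)$ sending edges to edges). $S_0$ is the graph with one vertex and no edges. For $k\ge0$, $S_{2,1^k}$ is the tree with vertex set $\{1,\ldots,k+3\}$ and edge set $\{\{1,j\}:2\le j\le k+2\}\cup\{\{k+2,k+3\}\}$. *)

From mathcomp Require Import all_boot.
Set Implicit Arguments. Unset Strict Implicit. Unset Printing Implicit Defensive.

Definition simple_graph (T : finType) (e : rel T) : Prop :=
  symmetric e /\ irreflexive e.

Definition hom (V : finType) (eH : rel V) (T : finType) (eG : rel T) : nat :=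
  #|[set f : {ffun V -> T} | [forall u, forall v, eH u v ==> eG (f u) (f v)]]|.

Definition S0_rel : rel 'I_1 := fun _ _ => false.

(* S_{2,1^k} on vertices 'I_(k+3); vertex i (1-based) is index i-1.
   Edges {1,j} (2 <= j <= k+2) become {0, j'} (1 <= j' <= k+1);
   edge {k+2,k+3} becomes {k+1, k+2}. *)
Definition S21_rel (k : nat) : rel 'I_(k + 3) := fun u v =>
  [|| (val u == 0) && (1 <= val v <= k + 1),
      (val v == 0) && (1 <= val u <= k + 1),
      (val u == k + 1) && (val v == k + 2)
    | (val u == k + 2) && (val v == k + 1)].
Arguments S21_rel k : clear implicits.

From mathcomp Require Import all_boot.
From mathcomp Require Import zify.

(* Vertex 2 of S_{2,1^(k+1)} is a leaf at the centre, and deleting it leaves a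
   copy of S_{2,1^k}.  A homomorphism into G is determined by its restriction
   to that copy together with the image of the deleted leaf, so
   hom(S_{2,1^(k+1)};G) <= |V(G)| hom(S_{2,1^k};G) = hom(S_0;G) hom(S_{2,1^k};G). *)

Set Implicit Arguments.
Unset Strict Implicit.
Unset Printing Implicit Defensive.

Section HomCounting.
Variables (T : finType) (e : rel T).

Definition hom_set (V : finType) (eH : rel V) :=
  [set f : {ffun V -> T} | [forall u, forall v, eH u v ==> e (f u) (f v)]].

Lemma hom_setE (V : finType) (eH : rel V) : hom eH e = #|hom_set eH|.
Proof. by []. Qed.

Lemma hom_setP (V : finType) (eH : rel V) (f : {ffun V -> T}) :
  reflect {homo f : u v / eH u v >-> e u v} (f \in hom_set eH).
Proof.
rewrite inE; apply: (iffP forallP) => [hf u v | hf u].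
  by move=> huv; have /forallP/(_ v)/implyP := hf u; apply.
by apply/forallP => v; apply/implyP; apply: hf.
Qed.

Lemma hom_edgeless (V : finType) (eH : rel V) :
  (forall u v, ~~ eH u v) -> hom eH e = #|T| ^ #|V|.
Proof.
move=> noedge; rewrite hom_setE -card_ffun -cardsT; apply: eq_card => f.
by rewrite in_setT; apply/hom_setP => u v; rewrite (negbTE (noedge u v)).
Qed.

Lemma hom_le_card_mul_hom (V V' : finType) (eH : rel V) (eH' : rel V')
    (s : V' -> V) (x : V) :
  {homo s : u v / eH' u v >-> eH u v} -> (forall v, v != x -> v \in codom s) ->
  hom eH e <= #|T| * hom eH' e.
Proof.
move=> s_homo s_cover.
pose restrict (f : {ffun V -> T}) := (f x, [ffun i => f (s i)]).
have restrict_inj : injective restrict.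
  move=> f g [fgx /ffunP fgs]; apply/ffunP => v.
  have [-> // | /s_cover /codomP [i ->]] := eqVneq v x.
  by have := fgs i; rewrite !ffunE.
have restrict_hom : restrict @: hom_set eH \subset setX [set: T] (hom_set eH').
  apply/subsetP => _ /imsetP [f /hom_setP f_hom ->]; rewrite in_setX in_setT /=.
  by apply/hom_setP => u v huv; rewrite !ffunE; apply/f_hom/s_homo.
rewrite !hom_setE -cardsT -cardsX -(card_imset _ restrict_inj).
exact: subset_leq_card.
Qed.

End HomCounting.

Lemma mem_codom_lift n (h i : 'I_n) : i != h -> i \in codom (lift h).
Proof. by case: (unliftP h i) => [j -> _ | -> /eqP //]; apply: codom_f. Qed.

Lemma hom_S0 (T : finType) (e : rel T) : hom S0_rel e = #|T|.
Proof. by rewrite hom_edgeless // card_ord expn1. Qed.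

Definition S21_leaf k : 'I_(k.+1 + 3) := Ordinal (ltn_addl k.+1 (isT : 1 < 3)).

Lemma S21_lift_homo k :
  {homo lift (S21_leaf k) : u v / S21_rel k u v >-> S21_rel k.+1 u v}.
Proof. by move=> u v; rewrite /S21_rel /= /bump; lia. Qed.

Theorem theorem3p1 (m : nat) (hm : 2 <= m) (T : finType) (e : rel T)
  (hG : simple_graph e) :
  hom S0_rel e * hom (S21_rel (m - 2)) e >= hom (S21_rel (m - 1)) e.
Proof.
have -> : m - 1 = (m - 2).+1 by lia.
rewrite hom_S0.
exact: hom_le_card_mul_hom (@S21_lift_homo (m - 2)) (@mem_codom_lift _ _).
Qed.
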